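(* Let $G$ be a sub-amply regular graph with parameters $(n,k,\lambda,\mu)$ which is not a disjoint union of cliques. Then \[ \lambda + 1 < \max\left\{4\sqrt{2n},\ \frac{6}{\sqrt{13}-1}\sqrt{k(\mu-1)}\right\}. \]
   Context: A graph is sub-amply regular with parameters $(n,k,\lambda,\mu)$ if it has $n$ vertices, is $k$-regular, any two adjacent vertices have exactly $\lambda$ common neighbors, and any two vertices at distance two from each other have at most $\mu$ common neighbors. *)

From mathcomp Require Import all_boot all_order all_algebra.
Set Implicit Arguments. Unset Strict Implicit. Unset Printing Implicit Defensive.

Definition simple_graph (T : finType) (e : rel T) : Prop :=
  symmetric e /\ irreflexive e.

Definition nbhd (T : finType) (e : rel T) (x : T) : {set T} := [set y | e x y].

Definition common_nbrs (T : finType) (e : rel T) (x y : T) : nat :=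
  #|nbhd e x :&: nbhd e y|.

Definition dist2 (T : finType) (e : rel T) (x y : T) : bool :=
  [&& x != y, ~~ e x y & [exists z, e x z && e z y]].

Definition sub_amply_regular (T : finType) (e : rel T) (n k lam mu : nat) : Prop :=
  [/\ simple_graph e,
      #|T| = n,
      (forall x : T, #|nbhd e x| = k),
      (forall x y : T, e x y -> common_nbrs e x y = lam) &
      (forall x y : T, dist2 e x y -> common_nbrs e x y <= mu)%N].

Definition disjoint_union_of_cliques (T : finType) (e : rel T) : Prop :=
  forall x y z : T, e x y -> e y z -> x != z -> e x z.

From mathcomp Require Import all_boot all_order all_algebra.
From mathcomp Require Import zify lra.
Set Implicit Arguments. Unset Strict Implicit. Unset Printing Implicit Defensive.

(* Suppose (lam+1)^2 >= 32 n and (lam+1)^2 >= 4 k (mu-1); the argument works with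
   the constant 2 in place of 6 / (sqrt 13 - 1).  A path x ~ y ~ z with x, z
   nonadjacent gives mu >= 1 and 2 lam + 3 <= k + mu.

   For an edge uv with set C of lam common neighbours, every neighbour of u outside
   {v} and C has at most mu - 1 neighbours in C, so the vertices of C miss few
   other vertices of C on average.  Two nonadjacent vertices of C together miss at
   least lam + 2 - mu of them, hence u, v and the vertices of C missing fewer than
   (lam + 2 - mu) / 2 others form a clique, and averaging shows that it has more
   than (lam + mu + 2) / 2 vertices.

   Two such large cliques, one of them maximal, share at most one vertex, since
   otherwise their union and intersection break the lam- and mu-bounds.  So a
   vertex w outside a large maximal clique K has at most 2k / (lam + mu + 1)
   neighbours in K: the large cliques through w and these neighbours are disjoint
   away from w.  Double counting the edges leaving K then contradicts
   32 n <= (lam+1)^2, because k - lam - 1 >= 3 (lam + 1) / 4. *)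

Section DoubleCounting.
Variables (aT bT : finType).

Lemma double_count (A : {set aT}) (B : {set bT}) (r : aT -> bT -> bool) :
  \sum_(a in A) #|[set b in B | r a b]| = \sum_(b in B) #|[set a in A | r a b]|.
Proof.
have card_sum (I : finType) (D : {set I}) (P : pred I) :
    #|[set i in D | P i]| = \sum_(i in D) P i.
  rewrite -sum1_card big_mkcond [RHS]big_mkcond /=.
  by apply: eq_bigr => i _; rewrite inE; case: (i \in D); case: (P i).
under eq_bigr do rewrite card_sum.
by rewrite exchange_big; apply: eq_bigr => b _; rewrite card_sum.
Qed.

Lemma sum_card_disjoint_le (J : {set aT}) (S : {set bT}) (F : aT -> {set bT}) :
  (forall i, i \in J -> F i \subset S) ->
  (forall i j x, i \in J -> j \in J -> x \in F i -> x \in F j -> i = j) ->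
  \sum_(i in J) #|F i| <= #|S|.
Proof.
move=> sub_FS disjF.
have cardF i : i \in J -> #|F i| = #|[set x in S | x \in F i]|.
  move=> iJ; apply: eq_card => x; rewrite inE andb_idl //.
  exact: (subsetP (sub_FS i iJ)).
rewrite (eq_bigr _ cardF) double_count -sum1_card; apply: leq_sum => x _.
apply/card_le1_eqP => i j; rewrite !inE => /andP[iJ xi] /andP[jJ xj].
exact: disjF jJ iJ xj xi.
Qed.

End DoubleCounting.

Lemma lam_mu_sqr_gap (k lam mu : nat) :
  0 < mu -> lam < k -> 4 * ((mu - 1) * k) <= lam.+1 ^ 2 ->
  4 * ((mu - 1) * (k - lam.+1)) < (lam.+2 - mu) ^ 2.
Proof.
move=> /prednK <- /subnK <-; rewrite subn1 addnK /=.
move: mu.-1 (k - lam.+1) lam.+1 (ltn0Sn lam) => P D L L_gt0 h.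
have P_le : 4 * P <= L.
  by rewrite -(leq_pmul2r L_gt0); move: h; rewrite !expnS expn0; nia.
move: h; rewrite subSS !expnS expn0; nia.
Qed.

Lemma clique_count_absurd (N k lam mu c : nat) :
  0 < mu -> lam < k -> 2 * lam + 3 <= k + mu ->
  lam + mu + 3 <= 2 * c -> c <= lam.+2 ->
  c * (k + 1 - c) * (lam + mu + 1) <= N * (2 * k) ->
  32 * N <= lam.+1 ^ 2 -> 4 * ((mu - 1) * k) <= lam.+1 ^ 2 -> False.
Proof.
move=> mu_gt0 lam_lt hD hc cL hcount hN hP.
have [P eP] : exists P, mu = P.+1 by exists mu.-1; lia.
have [D eD] : exists D, k = lam.+1 + D by exists (k - lam.+1); lia.
subst mu k; move: hP hN; rewrite subn1 /= !expnS expn0 muln1 => hP hN.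
have P_le : 4 * P <= lam.+1.
  rewrite -(leq_pmul2r (ltn0Sn lam)) (leq_trans _ hP) //.
  by rewrite -mulnA !leq_mul2l leq_addr !orbT.
have D_gt0 : 0 < D by lia.
have cnt : D * (c * lam.+2) <= N * (2 * (lam.+1 + D)).
  apply: leq_trans hcount; rewrite mulnA [D * c]mulnC.
  by apply: leq_mul; [apply: leq_mul => //; lia | lia].
have sq : lam.+1 * lam.+1 < 2 * c * lam.+2.
  apply: leq_trans (leq_mul (_ : lam.+4 <= 2 * c) (leqnn lam.+2)); [nia | lia].
have : D * (lam.+1 * lam.+1) * 8 < lam.+1 * lam.+1 * (lam.+1 + D).
  apply: (@leq_trans (D * (2 * c * lam.+2) * 8)).
    by rewrite ltn_pmul2r // ltn_pmul2l.
  apply: (@leq_trans (N * (lam.+1 + D) * 32)); first lia.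
  by rewrite mulnC mulnA leq_mul2r hN orbT.
by rewrite [D * _]mulnC -mulnA ltn_pmul2l //; lia.
Qed.

Section Cliques.
Variables (T : finType) (e : rel T).
Hypotheses (esym : symmetric e) (eirr : irreflexive e).

Definition clique (K : {set T}) : bool :=
  [forall a in K, forall b in K, (a != b) ==> e a b].

Definition maxclique (K : {set T}) : bool :=
  clique K && [forall w in ~: K, exists b in K, ~~ e w b].

Lemma cliqueP (K : {set T}) :
  reflect {in K &, forall a b, a != b -> e a b} (clique K).
Proof.
apply: (iffP forall_inP) => [cK a b aK bK ab | cK a aK].
  by have /forall_inP/(_ b bK)/implyP := cK a aK; apply.
by apply/forall_inP => b bK; apply/implyP; apply: cK.
Qed.

Lemma maxclique_nonadj (K : {set T}) w :
  maxclique K -> w \notin K -> exists2 b, b \in K & ~~ e w b.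
Proof.
case/andP=> _ /forall_inP/(_ w); rewrite inE => mK /mK.
by case/exists_inP=> b; exists b.
Qed.

Lemma cliqueU1 a (K : {set T}) :
  clique K -> {in K, forall b, a != b -> e a b} -> clique (a |: K).
Proof.
move=> /cliqueP cK aK; apply/cliqueP => x y; rewrite !inE.
move=> /predU1P[->|xK] /predU1P[->|yK] xy; first by rewrite eqxx in xy.
- exact: aK.
- by rewrite esym aK // eq_sym.
- exact: cK.
Qed.

Lemma clique_maxclique (K0 : {set T}) :
  clique K0 -> exists2 K, maxclique K & K0 \subset K.
Proof.
move=> cK0; pose P K := clique K && (K0 \subset K).
have P0 : P K0 by rewrite /P cK0 subxx.
have [K /andP[cK sK0K] maxK] := @arg_maxnP _ K0 P (fun K => #|K|) P0.
exists K => //; rewrite /maxclique cK; apply/forall_inP => w; rewrite inE => wK.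
apply/exists_inPn => adjK.
have cKw : clique (w |: K).
  by apply: cliqueU1 => // b bK _; have := adjK b bK; rewrite negbK.
have := maxK (w |: K); rewrite /P cKw (subset_trans sK0K (subsetUr _ _)).
by rewrite cardsU1 wK => /(_ isT); rewrite /= add1n ltnn.
Qed.

Lemma not_cliques_induced_path :
  ~ disjoint_union_of_cliques e ->
  exists x y z, [/\ e x y, e y z, x != z & ~~ e x z].
Proof.
move=> notU.
case: (boolP [exists x, exists y, exists z, [&& e x y, e y z, x != z & ~~ e x z]]).
  by case/existsP=> x /existsP[y /existsP[z /and4P[]]]; exists x, y, z.
move=> noPath; case: notU => x y z exy eyz xz; apply/negPn/negP => nxz.
case/negP: noPath; apply/existsP; exists x; apply/existsP; exists y.
by apply/existsP; exists z; apply/and4P.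
Qed.

End Cliques.

Section SubAmplyRegular.
Variables (T : finType) (e : rel T) (k lam mu : nat).
Hypotheses (esym : symmetric e) (eirr : irreflexive e).
Hypothesis deg : forall x, #|nbhd e x| = k.
Hypothesis common_adj : forall x y, e x y -> common_nbrs e x y = lam.
Hypothesis common_dist2 : forall x y, dist2 e x y -> common_nbrs e x y <= mu.

Local Notation N := (nbhd e).
Local Notation clique := (clique e).
Local Notation maxclique := (maxclique e).

Lemma card_common_adj x y : e x y -> #|N x :&: N y| = lam.
Proof. exact: common_adj. Qed.

Lemma card_common_nonadj_le x b (S : {set T}) :
  x != b -> ~~ e x b -> S \subset N x :&: N b -> #|S| <= mu.
Proof.
move=> xb nxb sS; have [->|[z zS]] := set_0Vmem S; first by rewrite cards0.
have d2 : dist2 e x b.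
  apply/and3P; split=> //; apply/existsP; exists z.
  by have := subsetP sS z zS; rewrite !inE (esym z).
exact: leq_trans (subset_leq_card sS) (common_dist2 d2).
Qed.

Lemma lam_lt_deg x y : e x y -> lam < k.
Proof.
move=> exy; rewrite -(deg y) -(card_common_adj exy); apply: proper_card.
apply/properP; split; first by apply/subsetP => t /setIP[].
by exists x; rewrite !inE ?eirr // esym.
Qed.

Lemma card_cliqueU (A B : {set T}) a b :
  clique A -> clique B -> a \in A :&: B -> b \in A :&: B -> a != b ->
  #|A :|: B| <= lam.+2.
Proof.
move=> /cliqueP cA /cliqueP cB /setIP[aA aB] /setIP[bA bB] ab.
have sub : A :|: B \subset a |: (b |: (N a :&: N b)).
  apply/subsetP => x; rewrite !inE.
  have [->|xa] := eqVneq x a => //; have [->|xb] := eqVneq x b => //=.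
  by case/orP=> xK; [rewrite !cA | rewrite !cB] => //; rewrite eq_sym.
apply: leq_trans (subset_leq_card sub) _.
rewrite (leq_trans (leq_card_setU _ _)) // cards1 add1n ltnS.
by rewrite (leq_trans (leq_card_setU _ _)) // cards1 card_common_adj ?cA.
Qed.

Lemma card_clique_le (K : {set T}) a b :
  clique K -> a \in K -> b \in K -> a != b -> #|K| <= lam.+2.
Proof.
move=> cK aK bK ab.
by rewrite -[K]setUid (card_cliqueU cK cK _ _ ab) // setIid.
Qed.

Lemma card_clique_meet_maxclique_le (A B : {set T}) w :
  clique A -> maxclique B -> w \in A -> w \notin B -> #|A :&: B| <= mu.
Proof.
move=> /cliqueP cA mB wA wB; have /cliqueP cB := (andP mB).1.
have [b bB nwb] := maxclique_nonadj mB wB.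
have wb : w != b by apply: contraNneq wB => ->.
apply: (card_common_nonadj_le wb nwb); apply/subsetP => x /setIP[xA xB].
have xw : x != w by apply: contraNneq wB => <-.
have ewx : e w x by rewrite cA // eq_sym.
have xb : x != b by apply: contraNneq nwb => <-; rewrite ewx.
by rewrite !inE ewx esym cB.
Qed.

Lemma large_cliques_meet_le1 (A B : {set T}) w :
  clique A -> maxclique B -> w \in A -> w \notin B ->
  lam + mu + 3 <= 2 * #|A| -> lam + mu + 3 <= 2 * #|B| ->
  {in A :&: B &, forall a b, a = b}.
Proof.
move=> cA mB wA wB largeA largeB a b aAB bAB; apply/eqP/negPn/negP => ab.
have := card_cliqueU cA (andP mB).1 aAB bAB ab.
have := card_clique_meet_maxclique_le cA mB wA wB.
have := cardsUI A B; lia.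
Qed.

Section EdgeClique.
Variables u v : T.
Hypothesis euv : e u v.

Let C := N u :&: N v.
Let miss w := #|(C :\ w) :\: N w|.
Let Out := N u :\: (v |: C).

Lemma card_common_edge : #|C| = lam.
Proof. exact: card_common_adj. Qed.

Lemma card_outside_edge : #|Out| = k - lam.+1.
Proof.
have vC : v \notin C by rewrite !inE eirr andbF.
have sub : v |: C \subset N u.
  by apply/subsetP => x; rewrite !inE => /predU1P[->|/andP[]//]; rewrite euv.
by rewrite cardsD (setIidPr sub) deg cardsU1 vC card_common_edge.
Qed.

Lemma miss_le_outside_nbrs w : w \in C -> miss w <= #|[set o in Out | e w o]|.
Proof.
rewrite !inE => /andP[euw evw].
have split_C : #|C :&: N w| + miss w + 1 = lam.
  have -> : C :&: N w = (C :\ w) :&: N w.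
    by apply/setP => x; rewrite !inE; case: eqVneq => // ->; rewrite eirr !andbF.
  rewrite cardsID -card_common_edge (cardsD1 w C) !inE euw evw; lia.
have sub : N w :&: N u \subset v |: ((C :&: N w) :|: [set o in Out | e w o]).
  apply/subsetP => x; rewrite !inE => /andP[ewx eux].
  by case: eqVneq => //= xv; case: (e v x); rewrite /= ?ewx ?eux ?xv.
have := subset_leq_card sub; rewrite card_common_adj 1?esym //.
have := cardsUI (C :&: N w) [set o in Out | e w o].
rewrite (cardsU1 v); have := leq_b1 (v \notin (C :&: N w) :|: [set o in Out | e w o]).
lia.
Qed.

Lemma sum_miss_le : \sum_(w in C) miss w <= (mu - 1) * (k - lam.+1).
Proof.
apply: (@leq_trans (\sum_(w in C) #|[set o in Out | e w o]|)).
  exact: leq_sum miss_le_outside_nbrs.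
rewrite double_count -card_outside_edge mulnC -sum_nat_const.
(* o shares with v the neighbour u and all its neighbours in C. *)
apply: leq_sum => o; rewrite !inE negb_or => /andP[/andP[ov]].
rewrite negb_and => nCo euo; rewrite euo /= esym in nCo.
have uC : u \notin [set w in C | e w o] by rewrite !inE eirr.
have sub : u |: [set w in C | e w o] \subset N o :&: N v.
  apply/subsetP => x; rewrite !inE => /predU1P[->|/andP[/andP[_ evx] exo]].
    by rewrite (esym o) (esym v) euo euv.
  by rewrite esym exo evx.
have := card_common_nonadj_le ov nCo sub; rewrite cardsU1 uC; lia.
Qed.

Lemma miss_nonadj_pair w w' : w \in C -> w' \in C -> w != w' -> ~~ e w w' ->
  lam.+2 <= miss w + miss w' + mu.
Proof.
rewrite !inE => /andP[euw evw] /andP[euw' evw'] ww' nww'.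
have uv : u != v by apply: contraTneq euv => ->; rewrite eirr.
have uC : u \notin C by rewrite !inE eirr.
have vC : v \notin C by rewrite !inE eirr andbF.
have cover : u |: (v |: C) \subset
    ((C :\ w) :\: N w) :|: ((C :\ w') :\: N w') :|: (N w :&: N w').
  apply/subsetP => x; rewrite !inE => /predU1P[->|/predU1P[->|/andP[eux evx]]].
  - by rewrite !(esym _ u) euw euw' !orbT.
  - by rewrite !(esym _ v) evw evw' !orbT.
  rewrite eux evx /=; case: (eqVneq x w) => [->|xw].
    by rewrite eirr (esym w') nww' ww'.
  case: (eqVneq x w') => [->|xw'] /=; first by rewrite nww'.
  by case: (e w x); case: (e w' x).
have card_uvC : #|u |: (v |: C)| = lam.+2.
  by rewrite cardsU1 in_setU1 (negbTE uv) (negbTE uC) cardsU1 (negbTE vC) card_common_edge.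
rewrite -card_uvC; apply: leq_trans (subset_leq_card cover) _.
apply: leq_trans (leq_card_setU _ _) _.
exact: leq_add (leq_card_setU _ _) (card_common_nonadj_le ww' nww' (subxx _)).
Qed.

Lemma edge_in_large_clique :
  4 * ((mu - 1) * (k - lam.+1)) < (lam.+2 - mu) ^ 2 ->
  exists2 K, clique K & [&& u \in K, v \in K & lam + mu + 3 <= 2 * #|K|].
Proof.
move=> small_miss.
pose Light := [set w in C | 2 * miss w + mu < lam.+2].
have LC : Light \subset C by apply/subsetP => w; rewrite inE => /andP[].
have cL : clique Light.
  apply/cliqueP => w w' /setIdP[wC lw] /setIdP[w'C lw'] ww'.
  apply/negPn/negP => nww'; have := miss_nonadj_pair wC w'C ww' nww'; lia.
have uC : u \notin C by rewrite !inE eirr.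
have vC : v \notin C by rewrite !inE eirr andbF.
have CE w : w \in Light -> e u w /\ e v w.
  by move/(subsetP LC); rewrite !inE => /andP.
have cK : clique (u |: (v |: Light)).
  apply: (cliqueU1 esym); first apply: (cliqueU1 esym) => // w /CE[].
    by rewrite esym.
  by move=> w; rewrite in_setU1 => /predU1P[-> //|/CE[]].
exists (u |: (v |: Light)) => //; rewrite !inE !eqxx orbT /=.
have uL : u \notin Light by apply: contra uC; apply: (subsetP LC).
have vL : v \notin Light by apply: contra vC; apply: (subsetP LC).
have uv : u != v by apply: contraTneq euv => ->; rewrite eirr.
rewrite cardsU1 in_setU1 (negbTE uv) (negbTE uL) cardsU1 vL.
have heavy : #|C :\: Light| * (lam.+2 - mu) <= 2 * \sum_(w in C) miss w.
  rewrite -sum_nat_const big_distrr [X in _ <= X](big_setID Light) /=.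
  apply: leq_trans (leq_addl _ _); apply: leq_sum => w.
  move=> /setDP[wC]; rewrite inE wC /= -leqNgt => lw.
  by rewrite leq_subLR addnC.
have := sum_miss_le; set d := lam.+2 - mu; set H := #|C :\: Light| => sum_le.
have : 2 * H * d < d * d by rewrite -mulnA; move: small_miss; rewrite expnS expn1; lia.
have d_pos : 0 < d by rewrite lt0n /d; apply: contraTneq small_miss => ->.
rewrite ltn_pmul2r // => heavy_lt.
have := cardsID Light C; rewrite (setIidPr LC) card_common_edge -/H; lia.
Qed.

End EdgeClique.

Lemma card_edges_out_le (K : {set T}) c m :
  (forall w, w \notin K -> #|N w :&: K| * c <= m) ->
  #|K| * (k + 1 - #|K|) * c <= #|T| * m.
Proof.
move=> outK.
have out_deg a : a \in K -> k + 1 - #|K| <= #|[set w in ~: K | e w a]|.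
  move=> aK; have -> : [set w in ~: K | e w a] = N a :\: K.
    by apply/setP => x; rewrite !inE esym andbC.
  have : N a :&: K \subset K :\ a.
    apply/subsetP => x; rewrite !inE => /andP[eax ->].
    by case: eqVneq eax => // ->; rewrite eirr.
  move/subset_leq_card; rewrite (cardsD1 a K) aK.
  have := cardsID K (N a); rewrite deg; lia.
apply: (@leq_trans (\sum_(w in ~: K) #|[set a in K | e w a]| * c)).
  rewrite -big_distrl /= double_count leq_mul2r -sum_nat_const.
  by rewrite leq_sum ?orbT.
apply: (@leq_trans (\sum_(w in ~: K) m)); last first.
  by rewrite sum_nat_const leq_mul2r max_card orbT.
apply: leq_sum => w; rewrite inE => wK.
have -> : [set a in K | e w a] = N w :&: K by apply/setP => x; rewrite !inE andbC.
exact: outK.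
Qed.

Section LargeCliques.
Hypothesis edge_in_maxclique : forall u v, e u v ->
  exists2 M, maxclique M & [&& u \in M, v \in M & lam + mu + 3 <= 2 * #|M|].

Lemma card_nbrs_maxclique_le (K : {set T}) w :
  maxclique K -> lam + mu + 3 <= 2 * #|K| -> w \notin K ->
  #|N w :&: K| * (lam + mu + 1) <= 2 * k.
Proof.
move=> mK largeK wK; set J := N w :&: K.
pose good q M := [&& maxclique M, w \in M, q \in M & lam + mu + 3 <= 2 * #|M|].
pose M q := odflt set0 [pick M | good q M].
have MP q : q \in J -> good q (M q).
  rewrite !inE => /andP[ewq _]; rewrite /M; case: pickP => [//|none].
  have [M' mM' /and3P[wM' qM' largeM']] := edge_in_maxclique ewq.
  by have := none M'; rewrite /good mM' wM' qM' largeM'.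
have notin_M q q' : q \in J -> q' \in J -> q != q' -> q \notin M q'.
  move=> qJ q'J qq'; apply/negP => qM'.
  have /and4P[/andP[cM' _] wM' q'M' largeM'] := MP q' q'J.
  move: qJ q'J; rewrite !inE => /andP[_ qK] /andP[_ q'K].
  have := large_cliques_meet_le1 cM' mK wM' wK largeM' largeK.
  move=> /(_ q q'); rewrite !inE qM' qK q'M' q'K => /(_ isT isT)/eqP.
  by rewrite (negbTE qq').
have disj q q' x : q \in J -> q' \in J -> x \in M q :\ w -> x \in M q' :\ w -> q = q'.
  move=> qJ q'J /setD1P[xw xM] /setD1P[_ xM']; apply/eqP/negPn/negP => qq'.
  have /and4P[/andP[cM _] wM qM largeM] := MP q qJ.
  have /and4P[mM' wM' _ largeM'] := MP q' q'J.
  have := large_cliques_meet_le1 cM mM' qM (notin_M q q' qJ q'J qq') largeM largeM'.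
  move=> /(_ x w); rewrite !inE xM xM' wM wM' => /(_ isT isT)/eqP.
  by rewrite (negbTE xw).
have sub q : q \in J -> M q :\ w \subset N w.
  move=> qJ; apply/subsetP => x /setD1P[xw xM].
  have /and4P[/andP[/cliqueP cM _] wM _ _] := MP q qJ.
  by rewrite inE cM // eq_sym.
rewrite -(deg w) -sum_nat_const.
apply: leq_trans (leq_mul (leqnn 2) (sum_card_disjoint_le sub disj)).
rewrite big_distrr /=; apply: leq_sum => q qJ; have /and4P[_ wM _ largeM] := MP q qJ.
by move: largeM; rewrite (cardsD1 w) wM; lia.
Qed.

End LargeCliques.

Section InducedPath.
Variables x y z : T.
Hypotheses (exy : e x y) (eyz : e y z) (xz : x != z) (nxz : ~~ e x z).

Lemma mu_gt0 : 0 < mu.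
Proof.
have := @card_common_nonadj_le x z [set y] xz nxz; rewrite cards1; apply.
by apply/subsetP => t /set1P->; rewrite !inE exy esym.
Qed.

Lemma double_lam_le : 2 * lam + 3 <= k + mu.
Proof.
set A := N x :&: N y; set B := N z :&: N y.
have cover : A :|: B \subset (N y :\ x) :\ z.
  apply/subsetP => t; rewrite !inE => /orP[]/andP[ht eyt]; rewrite eyt andbT.
    by apply/andP; split; apply: contraTneq ht => ->; rewrite ?eirr.
  by apply/andP; split; apply: contraTneq ht => ->; rewrite ?eirr // esym.
have meet : y |: (A :&: B) \subset N x :&: N z.
  apply/subsetP => t; rewrite !inE => /predU1P[->|/andP[/andP[-> _] /andP[-> _]] //].
  by rewrite exy esym.
have := card_common_nonadj_le xz nxz meet; rewrite cardsU1 !inE eirr andbF /=.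
have := subset_leq_card cover.
have := cardsD1 z (N y :\ x); have := cardsD1 x (N y).
rewrite deg !inE (esym y) exy eyz eq_sym xz.
have cA : #|A| = lam := card_common_adj exy.
have cB : #|B| = lam by rewrite /B card_common_adj // esym.
have := cardsUI A B; lia.
Qed.

Lemma sub_amply_regular_bound :
  lam.+1 ^ 2 < 32 * #|T| \/ lam.+1 ^ 2 < 4 * ((mu - 1) * k).
Proof.
have [|h32] := ltnP (lam.+1 ^ 2) (32 * #|T|); [by left | right].
rewrite ltnNge; apply/negP => h4.
have edge_max u v : e u v ->
    exists2 M, maxclique M & [&& u \in M, v \in M & lam + mu + 3 <= 2 * #|M|].
  move=> euv; have gap := lam_mu_sqr_gap mu_gt0 (lam_lt_deg euv) h4.
  have [K0 cK0 /and3P[uK0 vK0 K0_large]] := edge_in_large_clique euv gap.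
  have [M mM sK0M] := clique_maxclique esym cK0.
  exists M => //; rewrite !(subsetP sK0M) //= (leq_trans K0_large) //.
  by rewrite leq_mul2l subset_leq_card.
have [K mK /and3P[xK yK largeK]] := edge_max x y exy.
have xy : x != y by apply: contraTneq exy => ->; rewrite eirr.
have K_le := card_clique_le (andP mK).1 xK yK xy.
have := card_edges_out_le (fun w => card_nbrs_maxclique_le edge_max mK largeK).
move=> count; exact: clique_count_absurd mu_gt0 (lam_lt_deg exy) double_lam_le
  largeK K_le count h32 h4.
Qed.

End InducedPath.

End SubAmplyRegular.

Unset Implicit Arguments.
Import Order.TTheory GRing.Theory Num.Theory.
Local Open Scope ring_scope.

Lemma ltr_mul_sqrt (R : rcfType) (x a b : R) :
  0 <= a -> x ^+ 2 < a ^+ 2 * b -> x < a * Num.sqrt b.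
Proof.
move=> a_ge0 lt_sq; have [x_lt0|x_ge0] := ltP x 0.
  by rewrite (lt_le_trans x_lt0) ?mulr_ge0 ?sqrtr_ge0.
have b_ge0 : 0 <= b.
  rewrite leNgt; apply/negP => b_lt0.
  have := lt_le_trans lt_sq (mulr_ge0_le0 (sqr_ge0 a) (ltW b_lt0)).
  by rewrite ltNge sqr_ge0.
rewrite -(@ltr_pXn2r _ 2) ?nnegrE ?mulr_ge0 ?sqrtr_ge0 //.
by rewrite exprMn sqr_sqrtr.
Qed.

Lemma two_lt_sqrt13_const (R : rcfType) : 2 < 6 / (Num.sqrt 13 - 1) :> R.
Proof.
have q_ge0 : 0 <= Num.sqrt 13 :> R := sqrtr_ge0 _.
have q_sq : Num.sqrt 13 ^+ 2 = 13 :> R by rewrite sqr_sqrtr // ler0n.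
have q_gt1 : 1 < Num.sqrt 13 :> R by nra.
by rewrite ltr_pdivlMr ?subr_gt0 //; nra.
Qed.

Theorem theorem1 (R : rcfType) (T : finType) (e : rel T) (n k lam mu : nat) :
  sub_amply_regular e n k lam mu ->
  ~ disjoint_union_of_cliques e ->
  (lam.+1)%:R <
    Num.max (4 * Num.sqrt (2 * n%:R))
            (6 / (Num.sqrt 13 - 1) * Num.sqrt (k%:R * (mu%:R - 1))) :> R.
Proof.
move=> [[esym eirr] <- deg common_adj common_dist2] notU.
have [x [y [z [exy eyz xz nxz]]]] := not_cliques_induced_path notU.
have mu_pos := mu_gt0 esym common_dist2 exy eyz xz nxz.
have := sub_amply_regular_bound esym eirr deg common_adj common_dist2 exy eyz xz nxz.
case=> bound; rewrite -(ltr_nat R) natrX !natrM in bound; rewrite lt_max; apply/orP.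
  by left; apply: ltr_mul_sqrt; rewrite ?ler0n //; lra.
right; rewrite natrB // in bound.
apply: lt_le_trans (_ : 2 * Num.sqrt (k%:R * (mu%:R - 1)) <= _).
  by apply: ltr_mul_sqrt; rewrite ?ler0n //; lra.
by rewrite ler_wpM2r ?sqrtr_ge0 // ltW // two_lt_sqrt13_const.
Qed.
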